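(* Let $(L,\vee,\wedge,f,g,0,1)$ be a BDLGC-algebra, let $X(L)$ be the set of all prime filters of $L$, and define $R\subseteq X(L)\times X(L)$ by $F\,R\,G$ iff for all $a\in L$, $a\in G$ implies $f(a)\in F$. Then $(X(L),\subseteq,R)$ is a GC-frame.
   Context: A BDLGC-algebra $(L,\vee,\wedge,f,g,0,1)$ is a bounded distributive lattice with maps $f,g\colon L\to L$ forming an order-preserving Galois connection: $f(a)\leq b\iff a\leq g(b)$ for all $a,b\in L$. A GC-frame $(X,\leq,R)$ is a set $X$ with a quasiorder $\leq$ and a relation $R\subseteq X\times X$ such that $x\leq x'$, $x\,R\,y$ and $y'\leq y$ imply $x'\,R\,y'$. *)

From HB Require Import structures.
From mathcomp Require Import all_boot all_order.
Set Implicit Arguments. Unset Strict Implicit. Unset Printing Implicit Defensive.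
Import Order.TTheory.
Local Open Scope order_scope.

Definition galois_connection (disp : Order.disp_t) (L : porderType disp)
  (f g : L -> L) : Prop :=
  forall a b : L, f a <= b <-> a <= g b.

Definition BDLGC (disp : Order.disp_t) (L : tbDistrLatticeType disp)
  (f g : L -> L) : Prop := galois_connection f g.

Definition prime_filter (disp : Order.disp_t) (L : tbDistrLatticeType disp)
  (F : L -> Prop) : Prop :=
  [/\ F \top,
      ~ F \bot,
      (forall a b : L, F a -> a <= b -> F b),
      (forall a b : L, F a -> F b -> F (a `&` b)) &
      (forall a b : L, F (a `|` b) -> F a \/ F b)].

Definition primeFilters (disp : Order.disp_t) (L : tbDistrLatticeType disp) :=
  { F : L -> Prop | prime_filter F }.

Definition canR (disp : Order.disp_t) (L : tbDistrLatticeType disp)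
  (f : L -> L) (F G : primeFilters L) : Prop :=
  forall a : L, proj1_sig G a -> proj1_sig F (f a).

Definition pf_incl (disp : Order.disp_t) (L : tbDistrLatticeType disp)
  (F G : primeFilters L) : Prop :=
  forall a : L, proj1_sig F a -> proj1_sig G a.

Definition GC_frame (X : Type) (le : X -> X -> Prop) (R : X -> X -> Prop) : Prop :=
  (forall x, le x x) /\
  (forall x y z, le x y -> le y z -> le x z) /\
  (forall x x' y y', le x x' -> R x y -> le y' y -> R x' y').

From mathcomp Require Import all_boot all_order.

Section PrimeFilterFrame.

Variables (disp : Order.disp_t) (L : tbDistrLatticeType disp) (f : L -> L).

Lemma pf_incl_refl (F : primeFilters L) : pf_incl F F.
Proof. by []. Qed.

Lemma pf_incl_trans (F G H : primeFilters L) :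
  pf_incl F G -> pf_incl G H -> pf_incl F H.
Proof. by move=> FG GH a /FG /GH. Qed.

Lemma canR_incl (F F' G G' : primeFilters L) :
  pf_incl F F' -> canR f F G -> pf_incl G' G -> canR f F' G'.
Proof. by move=> FF' FG G'G a /G'G /FG /FF'. Qed.

End PrimeFilterFrame.

Theorem lemma3p2 (disp : Order.disp_t) (L : tbDistrLatticeType disp)
  (f g : L -> L) (HL : BDLGC f g) :
  GC_frame (@pf_incl disp L) (canR f).
Proof.
split; first exact: pf_incl_refl.
split; first exact: pf_incl_trans.
exact: canR_incl.
Qed.
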